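(* Let $\Sigma$ be a normal rule set and $D$ a database, let $P$ be a prioritization of $\Sigma$ and $w$ a weight assignment on $\Sigma$. For each preference $\preceq\,\in\{\subseteq_P,\le,\le_P,\le_w\}$, every repair of $\Sigma$ w.r.t. $\preceq$ and $D$ is a repair of $\Sigma$ w.r.t. $\subseteq$ (set inclusion) and $D$.
   Context: A database is a finite set of atoms whose arguments are constants. A normal (existential) rule is a sentence $\forall\mathbf{x}\forall\mathbf{y}\,(\varphi(\mathbf{x},\mathbf{y})\rightarrow\exists\mathbf{z}\,\psi(\mathbf{x},\mathbf{z}))$ where $\varphi$ is a conjunction of literals (atoms or negated atoms), $\psi$ is a conjunction of atoms or $\bot$ (a constraint), and every universally quantified variable occurs in a positive conjunct of $\varphi$; a normal rule set is a finite set of such rules. Stable models of $D\cup\Sigma$ are the Gelfond–Lifschitz stable models of the normal logic program $D\cup\mathsf{sk}(\Sigma)$, where $\mathsf{sk}$ replaces each existential variable $z$ of a rule $r$ by $f^r_z(\mathbf{x})$ with a fresh function symbol and $\neg$ by default negation (constraints exclude models satisfying their bodies). For a preorder $\preceq$ on the power set of $\Sigma$, write $S\prec S'$ if $S\preceq S'$ and $S'\not\preceq S$; a subset $S\subseteq\Sigma$ is a repair w.r.t. $\preceq$ and $D$ if $D\cup S$ has a stable model and for every $S'\subseteq\Sigma$ with $S\prec S'$, $D\cup S'$ has no stable model. Preferences: $S\le S'$ iff $|S|\le|S'|$. A prioritization of $\Sigma$ is a tuple $P=\langle P_1,\dots,P_n\rangle$ where $\{P_1,\dots,P_n\}$ is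 a partition of $\Sigma$; $S\subseteq_P S'$ iff $S\cap P_i=S'\cap P_i$ for all $i$, or there is $i$ with $S\cap P_i\subsetneq S'\cap P_i$ and $S\cap P_j=S'\cap P_j$ for all $j<i$; $S\le_P S'$ iff $|S\cap P_i|=|S'\cap P_i|$ for all $i$, or there is $i$ with $|S\cap P_i|<|S'\cap P_i|$ and $|S\cap P_j|=|S'\cap P_j|$ for all $j<i$. A weight assignment is a function $w:\Sigma\to\mathbb{N}$, and $S\le_w S'$ iff $\sum_{r\in S}w(r)\le\sum_{r\in S'}w(r)$. *)

From HB Require Import structures.
From mathcomp Require Import all_boot.
From Stdlib Require List.
Set Implicit Arguments. Unset Strict Implicit. Unset Printing Implicit Defensive.

Inductive rterm := RVar of nat | RConst of nat.
Definition ratom := (nat * list rterm)%type.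

(* A rule  body_pos /\ ~body_neg -> exists z. head.
   head = None encodes the constraint head "bottom";
   head = Some h encodes the conjunction of the atoms of h.
   Universally quantified variables = variables of the body;
   existential variables = variables of the head not occurring in the body. *)
Record rule := Rule {
  body_pos : list ratom;
  body_neg : list ratom;
  head : option (list ratom) }.

Definition vars_atom (a : ratom) : list nat :=
  pmap (fun t => if t is RVar v then Some v else None) a.2.
Definition vars (s : list ratom) : list nat := flatten (map vars_atom s).

Definition normal_rule (r : rule) : Prop :=
  (forall v, List.In v (vars (body_neg r)) -> List.In v (vars (body_pos r))) /\
  (match head r with None => True | Some h => h <> nil end).

Inductive gterm (F : Type) : Type :=
  | GConst : nat -> gterm F
  | GFun : F -> list (gterm F) -> gterm F.
Arguments GConst {F}.
Arguments GFun {F}.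

Definition gatom (F : Type) := (nat * list (gterm F))%type.
Definition interp (F : Type) := gatom F -> Prop.

(* Frontier variables x of a rule (universal variables occurring in the head),
   in a fixed order: the arguments of the Skolem terms f^r_z(x). *)
Definition frontier (r : rule) : list nat :=
  [seq v <- undup (vars (odflt nil (head r))) | v \in vars (body_pos r)].

Definition inst_body (F : Type) (s : nat -> gterm F) (a : ratom) : gatom F :=
  (a.1, map (fun t => match t with RVar v => s v | RConst c => GConst c end) a.2).

(* Skolemised head instance: the existential variable z of rule (index) i
   becomes f^i_z(x), represented by GFun (i, z) (s x). *)
Definition inst_head (I : Type) (i : I) (r : rule) (s : nat -> gterm (I * nat))
    (a : ratom) : gatom (I * nat) :=
  (a.1, map (fun t => match t with
                      | RConst c => GConst c
                      | RVar v => if v \in vars (body_pos r) then s v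
                                  else GFun (i, v) (map s (frontier r))
                      end) a.2).

Definition db := list (nat * list nat).
Definition db_atom (F : Type) (a : nat * list nat) : gatom F := (a.1, map GConst a.2).
Arguments db_atom {F}.

(** * Stable models of D u sk(S), S a subset of the rule set
    (rule set = finite family rl : T -> rule indexed by the finType T). *)

(* X is closed under the (ground) Gelfond-Lifschitz reduct of D u sk(S) w.r.t. M *)
Definition reduct_closed (T : finType) (rl : T -> rule) (D : db) (S : {set T})
    (M X : interp (T * nat)) : Prop :=
  (forall a, List.In a D -> X (db_atom a)) /\
  (forall (i : T) (s : nat -> gterm (T * nat)), i \in S ->
     (forall a, List.In a (body_pos (rl i)) -> X (inst_body s a)) ->
     (forall a, List.In a (body_neg (rl i)) -> ~ M (inst_body s a)) ->
     forall h, head (rl i) = Some h ->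
     forall a, List.In a h -> X (inst_head i (rl i) s a)).

Definition stable_model (T : finType) (rl : T -> rule) (D : db) (S : {set T})
    (M : interp (T * nat)) : Prop :=
  (* M is the least model of the reduct w.r.t. M *)
  reduct_closed rl D S M M /\
  (forall X, reduct_closed rl D S M X -> forall a, M a -> X a) /\
  (forall (i : T) (s : nat -> gterm (T * nat)), i \in S -> head (rl i) = None ->
     ~ ((forall a, List.In a (body_pos (rl i)) -> M (inst_body s a)) /\
        (forall a, List.In a (body_neg (rl i)) -> ~ M (inst_body s a)))).

Definition has_stable_model (T : finType) (rl : T -> rule) (D : db) (S : {set T}) : Prop :=
  exists M, stable_model rl D S M.

Definition pref (T : finType) := {set T} -> {set T} -> Prop.

Definition strict_pref (T : finType) (p : pref T) (S S' : {set T}) : Prop :=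
  p S S' /\ ~ p S' S.

Definition is_repair (T : finType) (rl : T -> rule) (D : db) (p : pref T)
    (S : {set T}) : Prop :=
  has_stable_model rl D S /\
  forall S' : {set T}, strict_pref p S S' -> ~ has_stable_model rl D S'.

Definition subset_pref (T : finType) : pref T := fun S S' => S \subset S'.
Definition card_pref (T : finType) : pref T := fun S S' => #|S| <= #|S'|.
Definition weight_pref (T : finType) (w : T -> nat) : pref T :=
  fun S S' => \sum_(r in S) w r <= \sum_(r in S') w r.

(* P = <P_1,...,P_n> as a sequence of blocks (P_{i+1} = nth set0 P i). *)
Definition prioritization (T : finType) (P : seq {set T}) : Prop :=
  all (fun B => B != set0) P /\
  (forall i j, i < j -> j < size P -> [disjoint nth set0 P i & nth set0 P j]) /\
  (forall r : T, exists2 B, B \in P & r \in B).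

Definition prio_sub_pref (T : finType) (P : seq {set T}) : pref T :=
  fun S S' =>
    (forall i, i < size P -> S :&: nth set0 P i = S' :&: nth set0 P i) \/
    (exists i, i < size P /\ (S :&: nth set0 P i) \proper (S' :&: nth set0 P i) /\
       forall j, j < i -> S :&: nth set0 P j = S' :&: nth set0 P j).

Definition prio_card_pref (T : finType) (P : seq {set T}) : pref T :=
  fun S S' =>
    (forall i, i < size P -> #|S :&: nth set0 P i| = #|S' :&: nth set0 P i|) \/
    (exists i, i < size P /\ #|S :&: nth set0 P i| < #|S' :&: nth set0 P i| /\
       forall j, j < i -> #|S :&: nth set0 P j| = #|S' :&: nth set0 P j|).

From mathcomp Require Import all_boot.

(* Each of the four preferences strictly prefers a proper superset: a rule set
   S' strictly containing S contains strictly more rules of the first block of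
   P on which S and S' differ, more rules in total, and more total weight.
   Hence a maximal set for any of them admits no satisfiable proper superset,
   i.e. it is maximal for inclusion. *)

Section Repairs.
Variable T : finType.

Definition proper_strict (p : pref T) : Prop :=
  forall S1 S2 : {set T}, S1 \proper S2 -> strict_pref p S1 S2.

Lemma repair_subset_pref (rl : T -> rule) (D : db) (p : pref T) (S : {set T}) :
  proper_strict p -> is_repair rl D p S -> is_repair rl D (@subset_pref T) S.
Proof.
move=> pstrict [hasS maxS]; split=> // S' [subSS' not_subS'S].
by apply: maxS; apply: pstrict; rewrite properE subSS'; apply/negP.
Qed.

Lemma proper_first_block (P : seq {set T}) (S1 S2 : {set T}) :
  (forall r : T, exists2 B, B \in P & r \in B) -> S1 \proper S2 ->
  exists i, [/\ i < size P, S1 :&: nth set0 P i \proper S2 :&: nth set0 P i &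
     forall j, j < i -> S1 :&: nth set0 P j = S2 :&: nth set0 P j].
Proof.
move=> cover /properP [sub12 [r rS2 rS1]].
have [B BP rB] := cover r.
have differ : exists i, (i < size P) && (S1 :&: nth set0 P i != S2 :&: nth set0 P i).
  exists (index B P); rewrite index_mem BP nth_index //=.
  by apply/eqP => /setP /(_ r); rewrite !inE rB rS2 (negbTE rS1).
have [i /andP [iP neq_i] min_i] := ex_minnP differ.
exists i; split => //; first by rewrite properEneq neq_i setSI.
move=> j lt_ji; apply/eqP/negbNE/negP => neq_j.
by move: (min_i j); rewrite neq_j (ltn_trans lt_ji iP) leqNgt lt_ji => /(_ isT).
Qed.

Lemma card_pref_proper_strict : proper_strict (@card_pref T).
Proof.
move=> S1 S2 /proper_card lt12.
by split; [exact: ltnW | rewrite /card_pref leqNgt lt12].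
Qed.

Lemma weight_pref_proper_strict (w : T -> nat) :
  (forall r, 0 < w r) -> proper_strict (weight_pref w).
Proof.
move=> wpos S1 S2 pr12; have [sub12 [r rS2 rS1]] := properP pr12.
have lt12 : \sum_(x in S1) w x < \sum_(x in S2) w x.
  rewrite (big_setID S1 (A := S2)) /= (setIidPr sub12) -[X in X < _]addn0.
  rewrite ltn_add2l (bigD1 r) /=; last by rewrite !inE rS1 rS2.
  exact: leq_trans (wpos r) (leq_addr _ _).
by split; [exact: ltnW | rewrite /weight_pref leqNgt lt12].
Qed.

Variable P : seq {set T}.
Hypothesis prioP : prioritization P.

Lemma prio_sub_pref_proper_strict : proper_strict (prio_sub_pref P).
Proof.
have [_ [_ cover]] := prioP.
move=> S1 S2 pr12; have sub12 := proper_sub pr12.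
have [i [iP pr_i eq_lt_i]] := @proper_first_block P S1 S2 cover pr12.
split; first by right; exists i.
case=> [eq21 | [j [_ [pr_j _]]]].
  by move: pr_i; rewrite (eq21 i iP) properxx.
by move: pr_j; rewrite properE (setSI _ sub12) andbF.
Qed.

Lemma prio_card_pref_proper_strict : proper_strict (prio_card_pref P).
Proof.
have [_ [_ cover]] := prioP.
move=> S1 S2 pr12; have sub12 := proper_sub pr12.
have [i [iP /proper_card lt_i eq_lt_i]] := @proper_first_block P S1 S2 cover pr12.
split; first by right; exists i; split=> //; split=> // j /eq_lt_i ->.
case=> [eq21 | [j [_ [lt_j _]]]].
  by move: lt_i; rewrite (eq21 i iP) ltnn.
by move: lt_j; rewrite ltnNge subset_leq_card // setSI.
Qed.

End Repairs.

Theorem theorem1 (T : finType) (rl : T -> rule) (D : db) (P : seq {set T})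
    (w : T -> nat) :
  (forall r : T, normal_rule (rl r)) ->
  prioritization P ->
  (forall r : T, 0 < w r) ->
  forall S : {set T},
    (is_repair rl D (prio_sub_pref P) S -> is_repair rl D (@subset_pref T) S) /\
    (is_repair rl D (@card_pref T) S -> is_repair rl D (@subset_pref T) S) /\
    (is_repair rl D (prio_card_pref P) S -> is_repair rl D (@subset_pref T) S) /\
    (is_repair rl D (weight_pref w) S -> is_repair rl D (@subset_pref T) S).
Proof.
move=> _ prioP wpos S; split; [|split; [|split]]; apply: repair_subset_pref.
- exact: prio_sub_pref_proper_strict.
- exact: card_pref_proper_strict.
- exact: prio_card_pref_proper_strict.
- exact: weight_pref_proper_strict.
Qed.
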